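(* Let $\mathcal{I}$ be an index set with $n$ elements carrying a partial order $\preceq$, and let $G=(V,E)$, $V=\mathcal{I}$, be a directed graph corresponding to $\preceq$, with $m$ edges and oriented incidence matrix $D\in\mathbb{R}^{m\times n}$. Let $\Delta$ be either $L=D^{T}D$ (general trend filtering) or the Kronecker matrix $K$ (Kronecker trend filtering, when $\mathcal{I}$ is a lattice $\{1,\dots,N\}^{k}$ and $G$ the corresponding grid graph). For $\bm{y}\in\mathbb{R}^n$ and $\lambda_{NI},\lambda_{F},\lambda_{T}>0$ define $$\hat{\bm{\beta}}^{NITF}(\bm{y},\lambda_{NI},\lambda_{T})=\arg\min_{\bm{\beta}\in\mathbb{R}^{n}}\tfrac12\|\bm{y}-\bm{\beta}\|_2^2+\lambda_{NI}\|D\bm{\beta}\|_{+}+\lambda_{T}\|\Delta\bm{\beta}\|_1,$$ $$\hat{\bm{\beta}}^{FLTF}(\bm{y},\lambda_{F},\lambda_{T})=\arg\min_{\bm{\beta}\in\mathbb{R}^{n}}\tfrac12\|\bm{y}-\bm{\beta}\|_2^2+\lambda_{F}\|D\bm{\beta}\|_1+\lambda_{T}\|\Delta\bm{\beta}\|_1.$$ Then for every $\bm{y}\in\mathbb{R}^n$ and $\lambda_{NI},\lambda_{T}>0$, $$\hat{\bm{\beta}}^{NITF}(\bm{y},\lambda_{NI},\lambda_{T})=\hat{\bm{\beta}}^{FLTF}\Big(\bm{y}-\frac{\lambda_{NI}}{2}D^{T}\bm{1},\ \frac{\lambda_{NI}}{2},\ \lambda_{T}\Big).$$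
   Context: A directed graph $G=(V,E)$ on $V=\mathcal{I}$ corresponds to the partial order $\preceq$ if a vector $\bm{\beta}$ indexed by $\mathcal{I}$ is isotonic w.r.t. $\preceq$ iff $\beta_{\bm{l}_1}\le\beta_{\bm{l}_2}$ whenever $E$ contains a directed chain of edges from $\bm{l}_1$ to $\bm{l}_2$. The oriented incidence matrix $D\in\mathbb{R}^{m\times n}$ has $D_{i,j}=1$ if vertex $j$ is the source of edge $i$, $D_{i,j}=-1$ if vertex $j$ is the target of edge $i$, and $0$ otherwise. For $\bm{x}\in\mathbb{R}^m$, $\|\bm{x}\|_{+}=\sum_i\max(x_i,0)$. For the lattice $\{1,\dots,N\}^{k}$, $D^{t}\in\mathbb{R}^{(N-2)\times N}$ is the second-difference matrix whose $i$-th row has entries $1,-2,1$ in columns $i,i+1,i+2$ and zeros elsewhere, and $K$ is the vertical stack of the $k$ blocks $I_N\otimes\cdots\otimes D^{t}\otimes\cdots\otimes I_N$ ($D^{t}$ in the $j$-th position, $j=1,\dots,k$), $\otimes$ the Kronecker product. $\bm{1}$ is the all-ones vector in $\mathbb{R}^m$. *)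

(* Vectors indexed by a finite index set I are functions I -> R;
   a matrix with rows indexed by J and columns by I is a function J -> I -> R. *)
From HB Require Import structures.
From mathcomp Require Import all_boot all_order all_algebra.
Set Implicit Arguments. Unset Strict Implicit. Unset Printing Implicit Defensive.
Import Order.TTheory GRing.Theory Num.Theory.
Local Open Scope ring_scope.

Section Defs.
Variable R : realFieldType.

Definition mapply (J I : finType) (A : J -> I -> R) (b : I -> R) : J -> R :=
  fun r => \sum_(i : I) A r i * b i.

Definition tapply (J I : finType) (A : J -> I -> R) (v : J -> R) : I -> R :=
  fun i => \sum_(r : J) A r i * v r.

Definition norm1 (J : finType) (v : J -> R) : R := \sum_(r : J) `|v r|.
Definition normplus (J : finType) (v : J -> R) : R := \sum_(r : J) Num.max (v r) 0.
Definition sqnorm2 (J : finType) (v : J -> R) : R := \sum_(r : J) v r ^+ 2.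

Definition incD (I Ed : finType) (src tgt : Ed -> I) : Ed -> I -> R :=
  fun e j => (j == src e)%:R - (j == tgt e)%:R.

Definition Lmat (I Ed : finType) (D : Ed -> I -> R) : I -> I -> R :=
  fun i j => \sum_(e : Ed) D e i * D e j.

Definition obj_NITF (I Ed J : finType) (D : Ed -> I -> R) (Delta : J -> I -> R)
  (y : I -> R) (lNI lT : R) (b : I -> R) : R :=
  2^-1 * sqnorm2 (fun i => y i - b i) + lNI * normplus (mapply D b)
  + lT * norm1 (mapply Delta b).

Definition obj_FLTF (I Ed J : finType) (D : Ed -> I -> R) (Delta : J -> I -> R)
  (y : I -> R) (lF lT : R) (b : I -> R) : R :=
  2^-1 * sqnorm2 (fun i => y i - b i) + lF * norm1 (mapply D b)
  + lT * norm1 (mapply Delta b).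

Definition is_argmin (I : finType) (F : (I -> R) -> R) (b : I -> R) : Prop :=
  forall b' : I -> R, F b <= F b'.

Definition shifted_y (I Ed : finType) (D : Ed -> I -> R) (y : I -> R) (lNI : R)
  : I -> R := fun i => y i - lNI / 2 * tapply D (fun _ => 1) i.

(* second-difference matrix D^t in R^{(N-2) x N}, with 0-based indices *)
Definition Dt (r c : nat) : R :=
  if c == r then 1 else if c == r.+1 then -2 else if c == r.+2 then 1 else 0.

End Defs.

Definition partial_order (I : finType) (le : rel I) : Prop :=
  reflexive le /\ antisymmetric le /\ transitive le.

Definition edge_rel (I Ed : finType) (src tgt : Ed -> I) : rel I :=
  fun a b => [exists e, (src e == a) && (tgt e == b)].

Definition corresponds (R : realFieldType) (I Ed : finType) (le : rel I)
  (src tgt : Ed -> I) : Prop :=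
  forall beta : I -> R,
    (forall l1 l2, le l1 l2 -> beta l1 <= beta l2) <->
    (forall l1 l2, connect (edge_rel src tgt) l1 l2 -> beta l1 <= beta l2).

(* Lattice {1,...,N}^k, represented 0-based as {ffun 'I_k -> 'I_N}. *)
Definition lattice (N k : nat) : finType := {ffun 'I_k -> 'I_N}.

Definition lattice_le (N k : nat) : rel (lattice N k) :=
  fun x y => [forall i, (x i <= y i)%N].

(* grid graph: one edge x -> x + e_j for each x and j with x_j < N-1 *)
Definition grid_edge (N k : nat) : finType :=
  {p : 'I_k * lattice N k | (p.2 p.1 < N.-1)%N}.

Definition grid_src (N k : nat) (e : grid_edge N k) : lattice N k := (val e).2.

Definition grid_tgt (N k : nat) (e : grid_edge N k) : lattice N k :=
  let x := (val e).2 in let j := (val e).1 in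
  [ffun i => if i == j then insubd (x i) (x i).+1 else x i].

(* rows of K: block j, row index given by x with x_j < N-2 (row of D^t) and the
   other coordinates ranging over the identity factors *)
Definition krow (N k : nat) : finType :=
  {p : 'I_k * lattice N k | (p.2 p.1 < N - 2)%N}.

(* entries of K = stack_j (I_N (x) ... (x) D^t (x) ... (x) I_N) *)
Definition Kmat (R : realFieldType) (N k : nat) (r : krow N k) (z : lattice N k) : R :=
  let j := (val r).1 in let x := (val r).2 in
  (\prod_(i < k | i != j) ((x i == z i)%:R : R)) * Dt R (x j) (z j).

(* Since max(x, 0) = (|x| + x) / 2, the penalty lNI ||D b||_+ equals
   (lNI/2) ||D b||_1 + (lNI/2) <D^T 1, b>.  The linear term is absorbed by
   completing the square in the data fit with y shifted by (lNI/2) D^T 1, so the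
   two objectives differ by a constant independent of b and have the same
   minimizers, whatever the trend penalty Delta is. *)
From HB Require Import structures.
From mathcomp Require Import all_boot all_order all_algebra ring.
Set Implicit Arguments. Unset Strict Implicit. Unset Printing Implicit Defensive.
Import Order.TTheory GRing.Theory Num.Theory.
Local Open Scope ring_scope.

Section Objectives.
Variable R : realFieldType.

Lemma normplusE (J : finType) (v : J -> R) :
  normplus v = 2^-1 * (norm1 v + \sum_r v r).
Proof.
rewrite /normplus /norm1 -big_split mulr_sumr /=.
by apply: eq_bigr => r _; rewrite maxr_absE subr0 addr0 mulrC addrC.
Qed.

Lemma sum_tapply_mul (J I : finType) (A : J -> I -> R) (v : J -> R) (b : I -> R) :
  \sum_i tapply A v i * b i = \sum_r v r * mapply A b r.
Proof.
rewrite /tapply /mapply.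
under eq_bigr do rewrite mulr_suml.
rewrite exchange_big /=; apply: eq_bigr => r _.
by rewrite mulr_sumr; apply: eq_bigr => i _; ring.
Qed.

Lemma sqnorm2B (I : finType) (u c : I -> R) :
  sqnorm2 (fun i => u i - c i) = sqnorm2 u - 2 * \sum_i c i * u i + sqnorm2 c.
Proof.
rewrite /sqnorm2 mulr_sumr -sumrB -big_split /=.
by apply: eq_bigr => i _; ring.
Qed.

Definition shift_NITF (I Ed : finType) (D : Ed -> I -> R) (lNI : R) : I -> R :=
  fun i => lNI / 2 * tapply D (fun _ => 1) i.

Lemma obj_NITF_FLTF (I Ed J : finType) (D : Ed -> I -> R) (Delta : J -> I -> R)
    (y : I -> R) (lNI lT : R) (b : I -> R) :
  obj_NITF D Delta y lNI lT b =
  obj_FLTF D Delta (shifted_y D y lNI) (lNI / 2) lT b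
    + (\sum_i shift_NITF D lNI i * y i - 2^-1 * sqnorm2 (shift_NITF D lNI)).
Proof.
set c := shift_NITF D lNI.
have shifted_fit : sqnorm2 (fun i => shifted_y D y lNI i - b i) =
    sqnorm2 (fun i => y i - b i) - 2 * \sum_i c i * (y i - b i) + sqnorm2 c.
  by rewrite -sqnorm2B; apply: eq_bigr => i _; rewrite /shifted_y /c /shift_NITF; ring.
have linear_term : \sum_i c i * b i = lNI / 2 * \sum_r mapply D b r.
  rewrite /c /shift_NITF; under eq_bigr do rewrite -mulrA.
  rewrite -mulr_sumr sum_tapply_mul; congr (_ * _).
  by apply: eq_bigr => r _; rewrite mul1r.
rewrite /obj_NITF /obj_FLTF normplusE shifted_fit.
under [\sum_i c i * (y i - b i)]eq_bigr do rewrite mulrBr.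
by rewrite sumrB linear_term; field.
Qed.

Lemma is_argmin_addr (I : finType) (F G : (I -> R) -> R) (k : R) (b : I -> R) :
  (forall b', F b' = G b' + k) -> is_argmin F b <-> is_argmin G b.
Proof.
move=> FGk; split=> Fmin b'; have := Fmin b'; by rewrite !FGk lerD2r.
Qed.

Lemma argmin_NITF_FLTF (I Ed J : finType) (D : Ed -> I -> R) (Delta : J -> I -> R)
    (y : I -> R) (lNI lT : R) (beta : I -> R) :
  is_argmin (obj_NITF D Delta y lNI lT) beta <->
  is_argmin (obj_FLTF D Delta (shifted_y D y lNI) (lNI / 2) lT) beta.
Proof. by apply: is_argmin_addr => b; apply: obj_NITF_FLTF. Qed.

End Objectives.

Theorem theorem2p2 :
  (* general trend filtering: Delta = L = D^T D *)
  (forall (R : realFieldType) (I Ed : finType) (le : rel I) (src tgt : Ed -> I),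
     partial_order le -> corresponds R le src tgt ->
     forall (y : I -> R) (lNI lT : R), 0 < lNI -> 0 < lT ->
     forall beta : I -> R,
       is_argmin (obj_NITF (incD R src tgt) (Lmat (incD R src tgt)) y lNI lT) beta
       <->
       is_argmin (obj_FLTF (incD R src tgt) (Lmat (incD R src tgt))
                    (shifted_y (incD R src tgt) y lNI) (lNI / 2) lT) beta)
  /\
  (* Kronecker trend filtering on the lattice {1..N}^k with its grid graph *)
  (forall (R : realFieldType) (N k : nat),
     let D := incD R (@grid_src N k) (@grid_tgt N k) in
     forall (y : lattice N k -> R) (lNI lT : R), 0 < lNI -> 0 < lT ->
     forall beta : lattice N k -> R,
       is_argmin (obj_NITF D (@Kmat R N k) y lNI lT) beta
       <->
       is_argmin (obj_FLTF D (@Kmat R N k) (shifted_y D y lNI) (lNI / 2) lT) beta).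
Proof.
split.
- by move=> R I Ed le src tgt _ _ y lNI lT _ _ beta; apply: argmin_NITF_FLTF.
- by move=> R N k D y lNI lT _ _ beta; apply: argmin_NITF_FLTF.
Qed.
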